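(* If $X$ is a topological space and $Y\subseteq X$ (with the subspace topology), then $\mathfrak{s}(Y)\leq\mathfrak{s}(X)$.
   Context: For infinite sets $U, A$, say $U$ splits $A$ if both $A\cap U$ and $A\setminus U$ are infinite. For a topological space $X$, $\mathfrak{s}(X)$ is the smallest cardinality of a family $\mathcal{U}$ of open subsets of $X$ such that every infinite $A\subseteq X$ is split by some $U\in\mathcal{U}$. *)

From HB Require Import structures.
From mathcomp Require Import all_boot all_order all_algebra.
From mathcomp Require Import all_classical all_reals all_analysis.
Set Implicit Arguments. Unset Strict Implicit. Unset Printing Implicit Defensive.
Local Open Scope classical_set_scope.

Definition splits {T : Type} (U A : set T) : Prop :=
  infinite_set (A `&` U) /\ infinite_set (A `\` U).

(* F is a family of open subsets of X splitting every infinite subset of X.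
   s(X) is the least cardinality of such a family. *)
Definition splitting_family (X : topologicalType) (F : set (set X)) : Prop :=
  (forall U, F U -> open U) /\
  (forall A : set X, infinite_set A -> exists2 U, F U & splits U A).

From mathcomp Require Import all_boot all_order all_algebra.
From mathcomp Require Import all_classical all_reals all_analysis.
Local Open Scope classical_set_scope.

(* Pull a splitting family of X back along the inclusion Y -> X.  The traces
   U ∩ Y are open in Y; an infinite A ⊆ Y is infinite in X, hence split there by
   some U, and then U ∩ Y splits A because A ∩ (U ∩ Y) = A ∩ U and
   A \ (U ∩ Y) = A \ U.  Taking traces does not increase cardinality. *)

Section SplitsPreimage.
Context {S T : Type} {f : S -> T}.

Lemma image_setI_preimage (A : set S) (U : set T) :
  f @` (A `&` f @^-1` U) = f @` A `&` U.
Proof.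
apply/seteqP; split; first by move=> _ [x [Ax Ufx] <-]; split; [exists x|].
by move=> _ [[x Ax <-] Ufx]; exists x.
Qed.

Lemma image_setD_preimage (A : set S) (U : set T) :
  f @` (A `\` f @^-1` U) = f @` A `\` U.
Proof.
apply/seteqP; split; first by move=> _ [x [Ax Ufx] <-]; split; [exists x|].
by move=> _ [[x Ax <-] Ufx]; exists x.
Qed.

Lemma splits_preimage (A : set S) (U : set T) :
  splits U (f @` A) -> splits (f @^-1` U) A.
Proof.
move=> [infI infD]; split => fin.
- by apply: infI; rewrite -image_setI_preimage; exact: finite_image.
- by apply: infD; rewrite -image_setD_preimage; exact: finite_image.
Qed.

Lemma infinite_set_image {A : set S} :
  injective f -> infinite_set A -> infinite_set (f @` A).
Proof.
move=> injf; apply: contra_not => finfA.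
rewrite -(eq_finite_set (inj_card_eq (f := f) _)) // => x y _ _; exact: injf.
Qed.

End SplitsPreimage.

Lemma splitting_family_preimage (S T : topologicalType) (f : S -> T)
    (F : set (set T)) :
  continuous f -> injective f -> splitting_family F ->
  splitting_family (preimage f @` F).
Proof.
move=> cf injf [openF splitF]; split.
  by move=> _ [U FU <-]; apply: open_comp (openF _ FU) => x _; exact: cf.
move=> A infA; have [U FU splitU] := splitF _ (infinite_set_image injf infA).
by exists (f @^-1` U); [exists U | exact: splits_preimage].
Qed.

Theorem lemma2p2 (X : topologicalType) (Y : set X) (F : set (set X)) :
  splitting_family F ->
  exists G : set (set (set_type Y)),
    splitting_family G /\ (G #<= F)%card.
Proof.
move=> splitF; exists (preimage (set_val : set_type Y -> X) @` F).
split; last exact: card_image_le.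
apply: splitting_family_preimage splitF; first exact: initial_continuous.
exact: val_inj.
Qed.
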